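(* Let $(N,\langle\cdot,\cdot\rangle)$ be a 2-step nilpotent Lie group with a left-invariant Riemannian metric and Lie algebra $\mathfrak n$. Suppose that either $\mathfrak n$ is non-singular, or $\mathfrak n$ has no Euclidean factor (i.e. $\ker j=\{0\}$) and is almost non-singular. Then every left-invariant skew-symmetric $(1,1)$-tensor $F$ on $N$ of type I whose associated 2-form $\omega=\langle F\cdot,\cdot\rangle$ is closed and which is parallel ($\nabla F=0$, $\nabla$ the Levi-Civita connection) is identically zero.
   Context: A real Lie algebra is 2-step nilpotent if $[[U,V],W]=0$ for all $U,V,W$. Let $\mathfrak z$ be the center, $\mathfrak v=\mathfrak z^\perp$, and for $Z\in\mathfrak z$ define $j_Z:\mathfrak v\to\mathfrak v$ by $\langle j_ZV,W\rangle=\langle Z,[V,W]\rangle$; $j:\mathfrak z\to\mathfrak{so}(\mathfrak v)$ is linear with kernel $\ker j$. $\mathfrak n$ is non-singular if $\mathrm{ad}(X):\mathfrak n\to\mathfrak z$ is onto for every $X\notin\mathfrak z$ (equivalently $j_Z$ is invertible for every $Z\neq0$); it is almost non-singular if there exist $Z,\tilde Z\in\mathfrak z$ with $j_Z$ invertible and $j_{\tilde Z}$ singular. $F$ (identified with a skew-symmetric endomorphism of $\mathfrak n$) is of type I if $F(\mathfrak v)\subseteq\mathfrak v$ and $F(\mathfrak z)\subseteq\mathfrak z$. Closedness of a left-invariant 2-form means $\omega([U,V],W)+\omega([V,W],U)+\omega([W,U],V)=0$ for all $U,V,W\in\mathfrak n$. *)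

(* A metric 2-step nilpotent Lie algebra (n, <.,.>) is modelled,
   after choosing an orthonormal basis, as R^n (row vectors) with the standard
   inner product and a bracket given by structure constants c i j k. *)
From HB Require Import structures.
From mathcomp Require Import all_boot all_order all_algebra.
Set Implicit Arguments. Unset Strict Implicit. Unset Printing Implicit Defensive.
Import Order.TTheory GRing.Theory Num.Theory.
Local Open Scope ring_scope.

Section Defs.
Variables (R : realFieldType) (n : nat).
Variable c : 'I_n -> 'I_n -> 'I_n -> R.
Local Notation vec := 'rV[R]_n.

Definition ip (u v : vec) : R := \sum_(i < n) u 0 i * v 0 i.

Definition e (i : 'I_n) : vec := delta_mx 0 i.

Definition br (u v : vec) : vec :=
  \row_k \sum_(i < n) \sum_(j < n) c i j k * u 0 i * v 0 j.

Definition skew_bracket : Prop := forall u v, br u v = - br v u.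

Definition two_step_nilpotent : Prop :=
  skew_bracket /\ (forall u v w, br (br u v) w = 0) /\ (exists u v, br u v != 0).

Definition in_z (Z : vec) : Prop := forall X, br Z X = 0.
Definition in_v (V : vec) : Prop := forall Z, in_z Z -> ip V Z = 0.

(* j_Z V : the unique vector with <j_Z V, W> = <Z, [V,W]> for all W in n
   (equivalently for all W in v, since [V,W] = 0 for W in z); it lies in v. *)
Definition jmap (Z V : vec) : vec := \row_k ip Z (br V (e k)).

Definition j_invertible (Z : vec) : Prop :=
  (forall V, in_v V -> jmap Z V = 0 -> V = 0) /\
  (forall W, in_v W -> exists2 V, in_v V & jmap Z V = W).

Definition nonsingular : Prop :=
  forall X, ~ in_z X -> forall Z, in_z Z -> exists Y, br X Y = Z.

Definition almost_nonsingular : Prop :=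
  exists Z, exists Z', [/\ in_z Z, in_z Z', j_invertible Z & ~ j_invertible Z'].

Definition no_euclidean_factor : Prop :=
  forall Z, in_z Z -> (forall V, in_v V -> jmap Z V = 0) -> Z = 0.

Definition app (F : 'M[R]_n) (u : vec) : vec := u *m F.

Definition skew_symmetric (F : 'M[R]_n) : Prop :=
  forall u v, ip (app F u) v = - ip u (app F v).

Definition typeI (F : 'M[R]_n) : Prop :=
  (forall V, in_v V -> in_v (app F V)) /\ (forall Z, in_z Z -> in_z (app F Z)).

Definition omega (F : 'M[R]_n) (u v : vec) : R := ip (app F u) v.

Definition closed_form (F : 'M[R]_n) : Prop :=
  forall U V W, omega F (br U V) W + omega F (br V W) U + omega F (br W U) V = 0.

(* Levi-Civita connection on left-invariant fields (Koszul formula):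
   <nabla_X Y, Z> = 1/2 (<[X,Y],Z> - <[Y,Z],X> + <[Z,X],Y>) *)
Definition nabla (X Y : vec) : vec :=
  \row_k (2%:R^-1 * (ip (br X Y) (e k) - ip (br Y (e k)) X + ip (br (e k) X) Y)).

(* nabla F = 0 : (nabla_X F) Y = nabla_X (F Y) - F (nabla_X Y) = 0 *)
Definition parallel (F : 'M[R]_n) : Prop :=
  forall X Y, nabla X (app F Y) = app F (nabla X Y).

End Defs.

From HB Require Import structures.
From mathcomp Require Import all_boot all_order all_algebra.
Set Implicit Arguments. Unset Strict Implicit. Unset Printing Implicit Defensive.
Import Order.TTheory GRing.Theory Num.Theory.
Local Open Scope ring_scope.

(* Since [n, n] lies in the center z, closedness of omega tested on
   (U, V, F[U,V]) leaves only |F[U,V]|^2 = 0, so F kills [n, n].  On v the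
   Levi-Civita connection is nabla_X Y = [X, Y] / 2, so parallelism gives
   [X, F Y] = F [X, Y] / 2 = 0 for X, Y in v: F Y is central and lies in v,
   hence vanishes.  For Z in z, skew-symmetry makes F Z orthogonal to [n, n];
   this forces F Z = 0 when some ad(X) maps onto z (non-singular case), and
   also when ker j = 0, since then j_{F Z} = 0.  As n = v + z, F = 0. *)

Section InnerProduct.
Variables (R : realFieldType) (n : nat).
Implicit Types u v w : 'rV[R]_n.

Lemma ipC u v : ip u v = ip v u.
Proof. by apply: eq_bigr => i _; rewrite mulrC. Qed.

Lemma ip0r u : ip u 0 = 0.
Proof. by rewrite /ip big1 // => i _; rewrite mxE mulr0. Qed.

Lemma ip0l u : ip 0 u = 0.
Proof. by rewrite ipC ip0r. Qed.

Lemma ip_mx u v : ip u v = (u *m v^T) 0 0.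
Proof. by rewrite /ip mxE; apply: eq_bigr => i _; rewrite mxE. Qed.

Lemma ip_e w k : ip w (e R k) = w 0 k.
Proof.
rewrite /ip (bigD1 k) //= big1 => [|i /negbTE ne].
  by rewrite /e mxE !eqxx mulr1 addr0.
by rewrite /e mxE ne andbF mulr0.
Qed.

Lemma ipxx_eq0 w : ip w w = 0 -> w = 0.
Proof.
move=> ww0; apply/rowP => i; rewrite mxE.
have sq_ge0 j : 0 <= w 0 j * w 0 j by rewrite -expr2 sqr_ge0.
have /eqP := @psumr_eq0P R _ predT _ (fun j _ => sq_ge0 j) ww0 i isT.
by rewrite mulf_eq0 orbb => /eqP.
Qed.

End InnerProduct.

Section CenterDecomposition.
Variables (R : realFieldType) (n : nat) (c : 'I_n -> 'I_n -> 'I_n -> R).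
Implicit Types U V W X Y Z : 'rV[R]_n.

Lemma brDr U X Y : br c U (X + Y) = br c U X + br c U Y.
Proof.
apply/rowP => k; rewrite !mxE -big_split; apply: eq_bigr => i _.
by rewrite -big_split; apply: eq_bigr => j _; rewrite mxE mulrDr.
Qed.

Definition structure_mx (j : 'I_n) : 'M[R]_n := \matrix_(i, k) c i j k.

Definition center_mx : 'M[R]_n := (\bigcap_(j < n) kermx (structure_mx j))%MS.

Lemma br_coordE Z X k : br c Z X 0 k = ip (\row_j (Z *m structure_mx j) 0 k) X.
Proof.
rewrite /ip mxE exchange_big; apply: eq_bigr => j _; rewrite !mxE mulr_suml.
by apply: eq_bigr => i _; rewrite mxE (mulrC (Z 0 i)).
Qed.

Lemma in_z_structure Z : in_z c Z <-> forall j, Z *m structure_mx j = 0.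
Proof.
split=> [Zz j | Zker X].
  apply/rowP => k; have := congr1 (fun M : 'rV_n => M 0 k) (Zz (e R j)).
  by rewrite /= br_coordE ip_e !mxE.
apply/rowP => k; rewrite br_coordE mxE /ip big1 // => j _.
by rewrite mxE Zker mxE mul0r.
Qed.

Lemma in_zP Z : in_z c Z <-> (Z <= center_mx)%MS.
Proof.
split=> [/in_z_structure Zker | /sub_bigcapmxP Zker].
  by apply/sub_bigcapmxP => j _; rewrite sub_kermx Zker.
by apply/in_z_structure => j; apply/eqP; rewrite -sub_kermx; apply: Zker.
Qed.

Lemma in_v_kermx V : (V <= kermx center_mx^T)%MS -> in_v c V.
Proof.
rewrite sub_kermx => /eqP VZ0 Z /in_zP /submxP [D ->].
by rewrite ip_mx trmx_mul mulmxA VZ0 mul0mx mxE.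
Qed.

Lemma in_z_in_v_eq0 W : in_z c W -> in_v c W -> W = 0.
Proof. by move=> Wz Wv; apply: ipxx_eq0; apply: Wv. Qed.

Lemma center_perp_decomp Y :
  exists YV YZ, [/\ in_v c YV, in_z c YZ & Y = YV + YZ].
Proof.
set K := kermx center_mx^T.
have capZK : (center_mx :&: K)%MS = 0.
  apply/row_matrixP => i; rewrite row0.
  have /[!sub_capmx] /andP[/in_zP iz /in_v_kermx iv] := row_sub i (center_mx :&: K)%MS.
  exact: in_z_in_v_eq0.
have full : row_full (center_mx + K)%MS.
  have rankK : \rank K = (n - \rank center_mx)%N by rewrite mxrank_ker mxrank_tr.
  rewrite /row_full; have := mxrank_sum_cap center_mx K.
  by rewrite capZK mxrank0 addn0 rankK => ->; rewrite subnKC // rank_leq_col.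
have /sub_addsmxP[u ->] : (Y <= center_mx + K)%MS by apply: submx_full.
exists (u.2 *m K), (u.1 *m center_mx); split; last by rewrite addrC.
- by apply: in_v_kermx; apply: submxMl.
- by apply/in_zP; apply: submxMl.
Qed.

Lemma mx_eq0_on_v_z (F : 'M[R]_n) :
  (forall V, in_v c V -> app F V = 0) -> (forall Z, in_z c Z -> app F Z = 0) ->
  F = 0.
Proof.
move=> Fv Fz; apply/row_matrixP => i; rewrite row0 rowE.
have [YV [YZ [YVv YZz ->]]] := center_perp_decomp (delta_mx 0 i).
by rewrite mulmxDl [YV *m F]Fv // [YZ *m F]Fz // addr0.
Qed.

End CenterDecomposition.

Section TwoStep.
Variables (R : realFieldType) (n : nat) (c : 'I_n -> 'I_n -> 'I_n -> R).
Implicit Types U V W X Y Z : 'rV[R]_n.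
Hypothesis br_skew : skew_bracket c.
Hypothesis br_nil : forall U V W, br c (br c U V) W = 0.

Lemma br_in_z U V : in_z c (br c U V).
Proof. by move=> X; apply: br_nil. Qed.

Lemma br_center_r X Z : in_z c Z -> br c X Z = 0.
Proof. by move=> Zz; rewrite br_skew Zz oppr0. Qed.

Lemma in_z_br_v W : (forall X, in_v c X -> br c X W = 0) -> in_z c W.
Proof.
move=> brvW X; have [XV [XZ [XVv XZz ->]]] := center_perp_decomp c X.
by rewrite brDr [br c W XZ]br_center_r // br_skew brvW // oppr0 addr0.
Qed.

Lemma nabla_v X Y : in_v c X -> in_v c Y -> nabla c X Y = 2%:R^-1 *: br c X Y.
Proof.
move=> Xv Yv; apply/rowP => k; rewrite mxE [RHS]mxE ip_e.
rewrite (ipC (br c Y _)) (ipC (br c _ X)) (Xv _ (br_in_z _ _)) (Yv _ (br_in_z _ _)).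
by rewrite subr0 addr0.
Qed.

Section ParallelForm.
Variable F : 'M[R]_n.
Hypotheses (F_skew : skew_symmetric F) (F_typeI : typeI c F).
Hypotheses (F_closed : closed_form c F) (F_parallel : parallel c F).

Lemma app_F_br U V : app F (br c U V) = 0.
Proof.
have Wz : in_z c (app F (br c U V)) by apply: F_typeI.2; apply: br_in_z.
have := F_closed U V (app F (br c U V)).
rewrite /omega [br c V _]br_center_r // Wz /app !mul0mx !ip0l !addr0.
exact: ipxx_eq0.
Qed.

Lemma app_F_v V : in_v c V -> app F V = 0.
Proof.
move=> Vv; have FVv := F_typeI.1 V Vv.
apply: (in_z_in_v_eq0 _ FVv); apply: in_z_br_v => X Xv.
have := F_parallel X V; rewrite (nabla_v Xv FVv) (nabla_v Xv Vv) /app -scalemxAl.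
rewrite -/(app F (br c X V)) app_F_br scaler0 => /eqP.
by rewrite scaler_eq0 invr_eq0 pnatr_eq0 => /eqP.
Qed.

Lemma app_F_z_orth_br Z U V : ip (app F Z) (br c U V) = 0.
Proof. by rewrite F_skew app_F_br ip0r oppr0. Qed.

Lemma app_F_z_nonsingular Z :
  nonsingular c -> (exists X, ~ in_z c X) -> in_z c Z -> app F Z = 0.
Proof.
move=> ns [X Xnz] Zz; have [Y XY] := ns X Xnz _ (F_typeI.2 Z Zz).
by apply: ipxx_eq0; rewrite -{2}XY app_F_z_orth_br.
Qed.

Lemma app_F_z_no_euclidean Z :
  no_euclidean_factor c -> in_z c Z -> app F Z = 0.
Proof.
move=> noE Zz; apply: noE; first exact: F_typeI.2.
by move=> V _; apply/rowP => k; rewrite !mxE app_F_z_orth_br.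
Qed.

End ParallelForm.
End TwoStep.

Theorem mainTheorem5 (R : realFieldType) (n : nat)
  (c : 'I_n -> 'I_n -> 'I_n -> R) (F : 'M[R]_n) :
  two_step_nilpotent c ->
  (nonsingular c \/ (no_euclidean_factor c /\ almost_nonsingular c)) ->
  skew_symmetric F -> typeI c F -> closed_form c F -> parallel c F ->
  F = 0.
Proof.
move=> [skew [nil [X [Y brXY]]]] hyp Fskew FI Fcl Fpar.
apply: (mx_eq0_on_v_z (c := c)) => [V | Z]; first exact: app_F_v.
case: hyp => [ns | [noE _]]; last exact: app_F_z_no_euclidean.
apply: (app_F_z_nonsingular skew nil Fskew FI Fcl ns); exists X => Xz.
by move: brXY; rewrite Xz eqxx.
Qed.
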